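(* Let $k$ be a positive integer. For any approval-dependent scoring rule $f$ and any instance $\mathcal{I}_{m,\mathcal{A}_n,k}$ in which some item has positive score, $P(\mathcal{I}_{m,\mathcal{A}_n,k},f)\le k$; hence $P(k,f)\le k$. Moreover, this bound is attained for certain approval-dependent scoring rules: in particular, for maximin diverse approval $f_{DA}$ with $\gamma>1$ groups, $P(k,f_{DA})=k$.
   Context: An instance $\mathcal{I}_{m,\mathcal{A}_n,k}=\langle m,\mathcal{A}_n,k\rangle$ consists of items $[m]$, users $[n]$, an approval profile $\mathcal{A}_n=(A_1,\dots,A_n)$ with $A_u\subseteq[m]$, and a target size $k\le m$. A scoring rule assigns each item $i$ a score $f(i,\mathcal{A}_n)\ge0$, additive over sets: $f(S)=\sum_{i\in S}f(i,\mathcal{A}_n)$. The rule is approval-dependent if $f(i,\mathcal{A}_n)=0$ for every item $i\notin\bigcup_{u=1}^nA_u$. Maximin diverse approval: users are partitioned into $\gamma$ nonempty groups $G_1,\dots,G_\gamma$ and $f_{DA}(i,\mathcal{A}_n)=\min_{g\in[\gamma]}\frac{1}{|G_g|}|\{u\in G_g: i\in A_u\}|$. A group $G\subseteq[n]$ is cohesive if $\bigcap_{u\in G}A_u\ne\emptyset$; $S$ represents $G$ if some $u\in G$ has $A_u\cap S\ne\emptyset$; $S$ satisfies justified representation (JR) if $|S|=k$ and $S$ represents every cohesive group of at least $n/k$ users. $S^*$ maximizes $f(S)$ over $|S|=k$; $S^*_{JR}$ maximizes $f(S)$ over sets satisfying JR. The price of JR is $P(\mathcal{I}_{m,\mathcal{A}_n,k},f)=f(S^*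 )/f(S^*_{JR})$ and $P(k,f)=\max_{\mathcal{I}_{m,\mathcal{A}_n,k}}P(\mathcal{I}_{m,\mathcal{A}_n,k},f)$ over all instances with set size $k$ (for $f_{DA}$, instances include the group partition). *)

From mathcomp Require Import all_boot all_order all_algebra.
Set Implicit Arguments. Unset Strict Implicit. Unset Printing Implicit Defensive.
Import Order.TTheory GRing.Theory Num.Theory.
Local Open Scope ring_scope.

Section Defs.
Variable R : realFieldType.

(* A scoring rule: for every number of items m, users n and approval profile
   A (A u = approval set of user u), a score for each item. *)
Definition scoring_rule := forall (m n : nat), ('I_n -> {set 'I_m}) -> 'I_m -> R.

Definition scoring_nonneg (f : scoring_rule) : Prop :=
  forall m n (A : 'I_n -> {set 'I_m}) (i : 'I_m), 0 <= f m n A i.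

Definition approval_dependent (f : scoring_rule) : Prop :=
  forall m n (A : 'I_n -> {set 'I_m}) (i : 'I_m),
    i \notin \bigcup_(u : 'I_n) A u -> f m n A i = 0.

Variables (m n : nat).

Definition setscore (s : 'I_m -> R) (S : {set 'I_m}) : R := \sum_(i in S) s i.

Definition cohesive (A : 'I_n -> {set 'I_m}) (G : {set 'I_n}) : bool :=
  \bigcap_(u in G) A u != set0.

Definition represents (A : 'I_n -> {set 'I_m}) (S : {set 'I_m}) (G : {set 'I_n}) : bool :=
  [exists u in G, A u :&: S != set0].

(* "at least n/k users" is written n <= k * |G| (equivalent for k > 0). *)
Definition JR (A : 'I_n -> {set 'I_m}) (k : nat) (S : {set 'I_m}) : bool :=
  (#|S| == k) &&
  [forall G : {set 'I_n},
     (cohesive A G && (n <= k * #|G|)%N) ==> represents A S G].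

(* optimum value of the set score over sets satisfying P
   (scores are nonnegative, so 0 is a neutral start) *)
Definition opt (s : 'I_m -> R) (P : pred {set 'I_m}) : R :=
  \big[Num.max/0]_(S : {set 'I_m} | P S) setscore s S.

Definition opt_all (s : 'I_m -> R) (k : nat) : R := opt s (fun S => #|S| == k).
Definition opt_JR (s : 'I_m -> R) (A : 'I_n -> {set 'I_m}) (k : nat) : R :=
  opt s (JR A k).

Definition price (s : 'I_m -> R) (A : 'I_n -> {set 'I_m}) (k : nat) : R :=
  opt_all s k / opt_JR s A k.

End Defs.

(* Maximin diverse approval, for a partition of the users into gamma groups
   given by g : 'I_n -> 'I_gamma (group of each user). *)
Definition partition_nonempty (gamma n : nat) (g : 'I_n -> 'I_gamma) : bool :=
  [forall c : 'I_gamma, exists u : 'I_n, g u == c].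

Definition f_DA (R : realFieldType) (gamma n : nat) (g : 'I_n -> 'I_gamma)
  (m : nat) (A : 'I_n -> {set 'I_m}) (i : 'I_m) : R :=
  \big[Num.min/1]_(c : 'I_gamma)
     (#|[set u | (g u == c) && (i \in A u)]|%:R / #|[set u | g u == c]|%:R).

From mathcomp Require Import all_boot all_order all_algebra.
From mathcomp Require Import zify.
Import Order.TTheory GRing.Theory Num.Theory.
Local Open Scope ring_scope.
Set Implicit Arguments.
Unset Strict Implicit.
Unset Printing Implicit Defensive.

(* Upper bound: a best item i is approved (f is approval-dependent and
   f(i) > 0), and greedily adding a common item of some large unrepresented
   cohesive group, starting from {i}, yields a JR committee containing i
   (padded with arbitrary items to size k).  So the best JR committee scores
   at least f(i), while no committee of size k scores more than k f(i).
   Tightness for f_DA: k - 1 cohesive blocks of n/k voters each approve a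
   private item that some group ignores entirely, so JR forces k - 1 seats
   onto items of score 0. *)

Section Optimum.
Variables (R : realFieldType) (m : nat) (s : 'I_m -> R).

Lemma le_opt (P : pred {set 'I_m}) S : P S -> setscore s S <= opt s P.
Proof. by move=> PS; rewrite /opt (bigD1 S) //= le_max lexx. Qed.

Lemma opt_le (P : pred {set 'I_m}) c :
  0 <= c -> (forall S, P S -> setscore s S <= c) -> opt s P <= c.
Proof.
move=> c_ge0 le_c; apply: (big_ind (fun x => x <= c)) => // x y xc yc.
by rewrite ge_max xc yc.
Qed.

Lemma le_setscore (S : {set 'I_m}) i :
  (forall j, 0 <= s j) -> i \in S -> s i <= setscore s S.
Proof. by move=> s_ge0 iS; rewrite /setscore (bigD1 i) //= lerDl sumr_ge0. Qed.

Lemma setscore_le_card (S : {set 'I_m}) c :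
  (forall j, s j <= c) -> setscore s S <= #|S|%:R * c.
Proof.
move=> le_c; rewrite mulr_natl -sumr_const.
by apply: ler_sum => i _; apply: le_c.
Qed.

Lemma setscoreD0 (S Z : {set 'I_m}) :
  (forall i, i \in Z -> s i = 0) -> setscore s S = setscore s (S :\: Z).
Proof.
move=> s_Z; rewrite /setscore (big_setID Z) /= big1 ?add0r // => i.
by rewrite inE => /andP[_ /s_Z].
Qed.

End Optimum.

Lemma exists_superset_card (T : finType) (S : {set T}) k :
  (#|S| <= k <= #|{: T}|)%N -> exists2 U : {set T}, S \subset U & #|U| = k.
Proof.
elim: k => [|k IH] /andP[Sk kT].
  by exists S => //; apply/eqP; rewrite -leqn0.
have [<-|neq_Sk] := eqVneq #|S| k.+1; first by exists S.
have [|U SU cardU] := IH; first by rewrite (ltnW kT) andbT; lia.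
have [x xU] : exists x, x \notin U.
  have : (0 < #|~: U|)%N by have := cardsC U; lia.
  by case/card_gt0P => x; rewrite inE; exists x.
exists (x |: U); first exact: subset_trans SU (subsetU1 x U).
by rewrite cardsU1 xU cardU.
Qed.

Section Greedy.
Variables (m n : nat) (A : 'I_n -> {set 'I_m}) (k : nat).

Definition justified (S : {set 'I_m}) : bool :=
  [forall G : {set 'I_n},
     (cohesive A G && (n <= k * #|G|)%N) ==> represents A S G].

Lemma JRE (S : {set 'I_m}) : JR A k S = (#|S| == k) && justified S.
Proof. by []. Qed.

Definition unrep (S : {set 'I_m}) : {set 'I_n} := [set u | A u :&: S == set0].

Lemma representsE (S : {set 'I_m}) (G : {set 'I_n}) :
  represents A S G = ~~ (G \subset unrep S).
Proof.
apply/existsP/subsetPn => [[u /andP[uG nz]] | [u uG uS]]; exists u => //.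
  by rewrite inE nz.
by rewrite uG; rewrite inE in uS.
Qed.

Lemma unrepS (S T : {set 'I_m}) : S \subset T -> unrep T \subset unrep S.
Proof.
by move=> ST; apply/subsetP => u; rewrite !inE !setI_eq0; apply: disjointWr.
Qed.

Lemma justifiedS (S T : {set 'I_m}) : S \subset T -> justified S -> justified T.
Proof.
move=> ST /forallP jS; apply/forallP => G; apply/implyP => /(implyP (jS G)).
by rewrite !representsE; apply: contra => /subset_trans; apply; apply: unrepS.
Qed.

Lemma unrepU1 j (S : {set 'I_m}) :
  unrep (j |: S) = unrep S :\: [set u | j \in A u].
Proof.
apply/setP => u; rewrite !inE setIUr -!subset0 subUset; congr (_ && _).
by rewrite subset0 setI_eq0 disjoint_sym disjoints1.
Qed.

Lemma greedy_step (S : {set 'I_m}) :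
  ~~ justified S -> exists j, (k * #|unrep (j |: S)| + n <= k * #|unrep S|)%N.
Proof.
case/forallPn => G; rewrite negb_imply representsE negbK.
case/andP=> /andP[/set0Pn[j /bigcapP jG] nG] GS; exists j.
have GSj : G \subset unrep S :&: [set u | j \in A u].
  by rewrite subsetI GS; apply/subsetP => u /jG; rewrite inE.
rewrite -(cardsID [set u | j \in A u] (unrep S)) -unrepU1 mulnDr addnC.
by rewrite leq_add2r (leq_trans nG) // leq_mul2l subset_leq_card ?orbT.
Qed.

Lemma greedy_justified (S : {set 'I_m}) : (0 < n)%N ->
  exists2 T : {set 'I_m}, S \subset T &
    justified T && (n * #|T| + k * #|unrep T| <= n * #|S| + k * #|unrep S|)%N.
Proof.
move=> n_gt0; have [c] := ubnP #|unrep S|; elim: c S => // c IH S ltSc.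
have [jS|/greedy_step[j lt_j]] := boolP (justified S).
  by exists S; [exact: subxx | rewrite jS /=].
have [|T jST /andP[jT leT]] := IH (j |: S).
  have : (k * #|unrep (j |: S)| < k * #|unrep S|)%N by lia.
  by rewrite ltn_mul2l => /andP[_]; lia.
exists T; first exact: subset_trans (subsetUr _ _) jST.
have le_card : (#|j |: S| <= #|S|.+1)%N by rewrite cardsU1; case: (_ \notin _).
move: (leq_mul (leqnn n) le_card); rewrite mulnS => le_n.
rewrite jT; apply: leq_trans leT (leq_trans (leq_add le_n (leqnn _)) _).
by rewrite [(n + _)%N]addnC -addnA leq_add2l addnC.
Qed.

(* Starting from {i0}, the potential n|T| + k|unrep T| is at most
   n + k(n - 1) < n(k + 1), so the greedy set has at most k items. *)
Lemma JR_exists_mem (i0 : 'I_m) : (0 < k)%N -> (k <= m)%N ->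
  i0 \in \bigcup_(u : 'I_n) A u -> exists2 S : {set 'I_m}, JR A k S & i0 \in S.
Proof.
move=> k_gt0 km /bigcupP[u _ i0u].
have n_gt0 : (0 < n)%N := leq_ltn_trans (leq0n u) (ltn_ord u).
have unrep0 : (#|unrep [set i0]| < n)%N.
  have : unrep [set i0] \proper [set: 'I_n].
    apply/properP; split=> //; exists u => //.
    by rewrite inE; apply/set0Pn; exists i0; rewrite !inE i0u eqxx.
  by move/proper_card; rewrite cardsT card_ord.
have [T i0T /andP[jT leT]] := greedy_justified [set i0] n_gt0.
have Tk : (#|T| <= k)%N by move: leT; rewrite cards1; nia.
have [|U TU cardU] := @exists_superset_card _ T k; first by rewrite Tk card_ord.
exists U; first by rewrite JRE cardU eqxx (justifiedS TU).
by apply: (subsetP TU); apply: (subsetP i0T); rewrite inE.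
Qed.

End Greedy.

Section PriceBound.
Variables (R : realFieldType) (m n : nat) (A : 'I_n -> {set 'I_m}) (k : nat).
Variable s : 'I_m -> R.
Hypotheses (k_gt0 : (0 < k)%N) (km : (k <= m)%N) (s_ge0 : forall i, 0 <= s i).

Lemma le_opt_JR i : i \in \bigcup_(u : 'I_n) A u -> s i <= opt_JR s A k.
Proof.
move=> /(JR_exists_mem k_gt0 km)[S JR_S iS].
exact: le_trans (le_setscore s_ge0 iS) (le_opt _ JR_S).
Qed.

Lemma opt_all_le_max i : (forall j, s j <= s i) -> opt_all s k <= k%:R * s i.
Proof.
move=> s_max; apply: opt_le => [|S /eqP <-]; last exact: setscore_le_card.
by rewrite mulr_ge0.
Qed.

Lemma price_le :
  (forall i, i \notin \bigcup_(u : 'I_n) A u -> s i = 0) ->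
  (exists i, 0 < s i) -> 0 < opt_JR s A k /\ price s A k <= k%:R.
Proof.
move=> s_dep [i0 s_i0]; set i1 := [arg max_(i > i0) s i]%O.
have s_max j : s j <= s i1 by rewrite /i1; case: arg_maxP => // i _; apply.
have s_i1 : 0 < s i1 := lt_le_trans s_i0 (s_max i0).
have /le_opt_JR JR_i1 : i1 \in \bigcup_(u : 'I_n) A u.
  by apply: contraTT s_i1 => /s_dep ->; rewrite ltxx.
have opt_gt0 := lt_le_trans s_i1 JR_i1.
split => //; rewrite /price ler_pdivrMr //.
exact: le_trans (opt_all_le_max s_max) (ler_wpM2l (ler0n _ _) JR_i1).
Qed.

End PriceBound.

Section MaximinDiverseApproval.
Variables (R : realFieldType) (gamma n : nat) (g : 'I_n -> 'I_gamma).
Variables (m : nat) (A : 'I_n -> {set 'I_m}).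

Local Notation f := (f_DA R g A).

Lemma f_DA_ge0 i : 0 <= f i.
Proof.
apply: (big_ind (fun x : R => 0 <= x)) => // [x y x0 y0|c _].
  by rewrite le_min x0 y0.
exact: divr_ge0.
Qed.

Lemma f_DA_gt0 i : (forall c, exists2 u, g u = c & i \in A u) -> 0 < f i.
Proof.
move=> approved; apply: (big_ind (fun x : R => 0 < x)) => // [x y x0 y0|c _].
  by rewrite lt_min x0 y0.
have [u gu iu] := approved c; apply: divr_gt0; rewrite ltr0n card_gt0.
all: by apply/set0Pn; exists u; rewrite inE gu eqxx ?iu.
Qed.

Lemma f_DA_eq0 i c : (forall u, g u = c -> i \notin A u) -> f i = 0.
Proof.
move=> unapproved; apply/eqP; rewrite eq_le f_DA_ge0 andbT /f_DA (bigD1 c) //=.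
have -> : [set u | (g u == c) && (i \in A u)] = set0.
  by apply/setP => u; rewrite !inE; case: eqP => //= /unapproved /negbTE.
by rewrite cards0 mul0r ge_min lexx.
Qed.

Lemma f_DA_approval_dependent i :
  (0 < gamma)%N -> i \notin \bigcup_(u : 'I_n) A u -> f i = 0.
Proof.
move=> gamma_gt0 i_unapproved; apply: (@f_DA_eq0 _ (Ordinal gamma_gt0)) => u _.
by apply: contra i_unapproved => iu; apply/bigcupP; exists u.
Qed.

Lemma eq_f_DA i j : (forall u, (i \in A u) = (j \in A u)) -> f i = f j.
Proof.
by move=> same; apply: eq_bigr => c _; under eq_finset do rewrite same.
Qed.

End MaximinDiverseApproval.

(* Voters come in k blocks of gamma.  Block [None] has one voter in each
   group and approves the k items [lshift k' i]; block [Some b] lies in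
   group 0 and approves only [rshift k b], which group [ord_max] ignores. *)
Section TightInstance.
Variables (R : realFieldType) (k' gam' : nat).
Local Notation k := k'.+1.
Local Notation gamma := gam'.+2.

Definition voter := (option 'I_k' * 'I_gamma)%type.
Definition n_voters := #|{: voter}|.
Definition voter_of (b : option 'I_k') (p : 'I_gamma) : 'I_n_voters :=
  enum_rank ((b, p) : voter).
Definition block (u : 'I_n_voters) : option 'I_k' := (enum_val u).1.

Definition tight_group (u : 'I_n_voters) : 'I_gamma :=
  if block u is None then (enum_val u).2 else ord0.

Definition tight_ballot (u : 'I_n_voters) : {set 'I_(k + k')} :=
  if block u is Some b then [set rshift k b] else [set lshift k' i | i : 'I_k].

Local Notation score := (f_DA R tight_group tight_ballot).

Lemma block_voter_of b p : block (voter_of b p) = b.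
Proof. by rewrite /block /voter_of enum_rankK. Qed.

Lemma card_voters : n_voters = (k * gamma)%N.
Proof. by rewrite /n_voters card_prod card_option !card_ord. Qed.

Lemma tight_group_None c : tight_group (voter_of None c) = c.
Proof. by rewrite /tight_group block_voter_of /voter_of enum_rankK. Qed.

Lemma tight_partition : partition_nonempty tight_group.
Proof.
apply/forallP => c; apply/existsP; exists (voter_of None c).
by rewrite tight_group_None.
Qed.

Lemma mem_ballot_lshift u i :
  (lshift k' i \in tight_ballot u) = (block u == None).
Proof.
rewrite /tight_ballot; case: (block u) => [b|] /=.
  by rewrite inE eq_lrshift.
by rewrite mem_imset //; apply: lshift_inj.
Qed.

Lemma mem_ballot_rshift u b :
  (rshift k b \in tight_ballot u) = (block u == Some b).
Proof.
rewrite /tight_ballot; case: (block u) => [b'|] /=.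
  by rewrite inE eq_rshift eq_sym.
by apply/imsetP => -[i _ /eqP]; rewrite eq_rlshift.
Qed.

Definition top_score := score (lshift k' ord0).

Lemma score_lshift i : score (lshift k' i) = top_score.
Proof. by apply: eq_f_DA => u; rewrite !mem_ballot_lshift. Qed.

Lemma score_rshift b : score (rshift k b) = 0.
Proof.
apply: (@f_DA_eq0 _ _ _ _ _ _ _ ord_max) => u.
by rewrite mem_ballot_rshift /tight_group; case: (block u).
Qed.

Lemma top_score_gt0 : 0 < top_score.
Proof.
apply: f_DA_gt0 => c; exists (voter_of None c); first exact: tight_group_None.
by rewrite mem_ballot_lshift block_voter_of.
Qed.

Lemma score_le_top j : score j <= top_score.
Proof.
case: (split_ordP j) => [i ->|b ->]; first by rewrite score_lshift.
by rewrite score_rshift ltW // top_score_gt0.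
Qed.

Lemma score_ge0 j : 0 <= score j.
Proof. exact: f_DA_ge0. Qed.

Lemma opt_all_tight : opt_all score k = k%:R * top_score.
Proof.
apply/eqP; rewrite eq_le (opt_all_le_max _ score_ge0 score_le_top) /=.
pose Y := [set lshift k' i | i : 'I_k].
have ->: k%:R * top_score = setscore score Y.
  rewrite /setscore (eq_bigr (fun=> top_score)) => [|_ /imsetP[i _ ->]].
    by rewrite sumr_const card_imset ?card_ord ?mulr_natl //; apply: lshift_inj.
  exact: score_lshift.
by apply: le_opt; rewrite /= card_imset ?card_ord //; apply: lshift_inj.
Qed.

Lemma JR_tight_rshift T b : JR tight_ballot k T -> rshift k b \in T.
Proof.
case/andP=> _ /forallP/(_ [set voter_of (Some b) p | p : 'I_gamma]) /implyP.
set G := [set _ | _ : _]; have in_G u : u \in G -> block u = Some b.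
  by case/imsetP=> p _ ->; rewrite block_voter_of.
have card_G : #|G| = gamma.
  by rewrite card_imset ?card_ord // => p q /enum_rank_inj[].
have large_cohesive : cohesive tight_ballot G && (n_voters <= k * #|G|)%N.
  rewrite card_G -card_voters leqnn andbT; apply/set0Pn; exists (rshift k b).
  by apply/bigcapP => u /in_G bu; rewrite mem_ballot_rshift bu.
move/(_ large_cohesive)/existsP => [u /andP[uG /set0Pn[j]]].
by rewrite /tight_ballot in_G // !inE => /andP[/eqP ->].
Qed.

Lemma opt_JR_tight : opt_JR score tight_ballot k = top_score.
Proof.
apply/eqP; rewrite eq_le; apply/andP; split; last first.
  apply: le_opt_JR => //; [exact: leq_addr | exact: score_ge0 | apply/bigcupP].
  by exists (voter_of None ord0); rewrite // mem_ballot_lshift block_voter_of.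
apply: opt_le => [|T JR_T]; first exact/ltW/top_score_gt0.
pose X := [set rshift k b | b : 'I_k'].
have XT : X \subset T.
  by apply/subsetP => _ /imsetP[b _ ->]; apply: JR_tight_rshift.
rewrite (@setscoreD0 _ _ _ _ X); last first.
  by move=> _ /imsetP[b _ ->]; apply: score_rshift.
apply: le_trans (setscore_le_card _ score_le_top) _.
move: JR_T; rewrite JRE cardsDS // card_imset ?card_ord; last exact: rshift_inj.
by case/andP=> /eqP -> _; rewrite subSnn mul1r.
Qed.

Lemma price_tight : price score tight_ballot k = k%:R.
Proof.
by rewrite /price opt_all_tight opt_JR_tight mulfK // gt_eqF // top_score_gt0.
Qed.

End TightInstance.

Theorem theorem1 (R : realFieldType) (k : nat) (hk : (0 < k)%N) :
  (* P(I, f) <= k for every approval-dependent scoring rule and instance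
     with some positively scored item (the denominator is positive) *)
  (forall f : scoring_rule R, scoring_nonneg f -> approval_dependent f ->
     forall (m n : nat) (A : 'I_n -> {set 'I_m}), (k <= m)%N ->
       (exists i : 'I_m, 0 < f m n A i) ->
       0 < opt_JR (f m n A) A k /\ price (f m n A) A k <= k%:R)
  /\
  (* maximin diverse approval with gamma > 1 groups: P(k, f_DA) = k *)
  (forall gamma : nat, (1 < gamma)%N ->
     (* f_DA is approval-dependent *)
     (forall (n : nat) (g : 'I_n -> 'I_gamma), partition_nonempty g ->
        forall (m : nat) (A : 'I_n -> {set 'I_m}) (i : 'I_m),
          i \notin \bigcup_(u : 'I_n) A u -> f_DA R g A i = 0)
     /\
     (forall (n : nat) (g : 'I_n -> 'I_gamma), partition_nonempty g ->
        forall (m : nat) (A : 'I_n -> {set 'I_m}), (k <= m)%N ->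
          (exists i : 'I_m, 0 < f_DA R g A i) ->
          0 < opt_JR (f_DA R g A) A k /\ price (f_DA R g A) A k <= k%:R)
     /\
     (exists (n : nat) (g : 'I_n -> 'I_gamma) (m : nat) (A : 'I_n -> {set 'I_m}),
        [/\ partition_nonempty g, (k <= m)%N,
            (exists i : 'I_m, 0 < f_DA R g A i) &
            price (f_DA R g A) A k = k%:R])).
Proof.
split=> [f f_ge0 f_dep m n A km|gamma gamma_gt1].
  by apply: price_le => // i; apply: f_dep.
have f_DA_dep n g m A i :=
  @f_DA_approval_dependent R gamma n g m A i (ltnW gamma_gt1).
split=> [n g _|]; first exact: f_DA_dep.
split=> [n g _ m A km|].
  by apply: price_le => // i; [exact: f_DA_ge0 | exact: f_DA_dep].
case: k hk => // k' _; case: gamma gamma_gt1 {f_DA_dep} => [|[|gam']] // _.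
exists (n_voters k' gam'), (@tight_group k' gam'), (k'.+1 + k').
exists (@tight_ballot k' gam').
split; [exact: tight_partition | exact: leq_addr | | exact: price_tight].
by exists (lshift k' ord0); apply: top_score_gt0.
Qed.
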